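(* Let $k\ge2$ and $n\ge1$ be integers and let $G_{k,n}$ be the graph defined below. Then $G_{k,n}$ is type 2 (it has no $(k+1)$-total colouring), and $$k+1<\chi''_c(G_{k,n})\le k+1+\frac1n.$$
   Context: A half-edge has exactly one end vertex. Let $H_k$ be obtained from $K_{k,k}$ by deleting one vertex but keeping its $k$ incident edges as half-edges, and let $H'_k$ be obtained from $H_k$ by deleting $k-2$ of its half-edges (so $H'_k$ has exactly two half-edges, at distinct vertices). Let $B_1,\ldots,B_n$ be copies of $H'_k$, with the two half-edges of $B_i$ named $f_i$ and $f'_i$. Let $B_0$ be a single vertex $u$ with two half-edges $f_0$ and $f'_{n+1}$. The graph $G_{k,n}$ is obtained from the disjoint union of $B_0,B_1,\ldots,B_n$ by joining, for each $0\le i\le n$, the half-edges $f_i$ and $f'_{i+1}$ into an edge $e_i$ between their end vertices. It is a finite graph of maximum degree $k$. A $(k+1)$-total colouring assigns to vertices and edges one of $k+1$ colours so that adjacent vertices, edges sharing an end vertex, and incident vertex–edge pairs get different colours. For integers $p\ge q\ge1$, a $(p,q)$-total colouring assigns colours in $\{0,\ldots,p-1\}$ to vertices and edges such that $q\le|c(a)-c(b)|\le p-q$ for every such adjacent/incident pair $a,b$; $\chi''_c(G)=\inf\{p/q \mid G \text{ has a } (p,q)\text{-total colouring}\}$. *)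

From mathcomp Require Import all_boot all_order all_algebra.
From mathcomp Require Import classical_sets reals.
Set Implicit Arguments. Unset Strict Implicit. Unset Printing Implicit Defensive.
Import Order.TTheory GRing.Theory Num.Theory.

(* e : rel T is assumed symmetric and irreflexive (a simple graph).
   Vertices coloured by cv : T -> nat; an edge {x,y} (e x y) coloured by
   ce x y, with ce required symmetric on edges.                           *)

Definition cdist (a b : nat) : nat := maxn a b - minn a b.

Definition is_total_colouring (T : finType) (e : rel T) (m : nat)
    (cv : T -> nat) (ce : T -> T -> nat) : Prop :=
  (forall x, cv x < m) /\
      (forall x y, e x y -> ce x y < m) /\
      (forall x y, e x y -> ce x y = ce y x) /\
      (forall x y, e x y -> cv x <> cv y) /\
      (forall x y, e x y -> cv x <> ce x y) /\
      (forall x y z, e x y -> e x z -> y != z -> ce x y <> ce x z).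

Definition has_total_colouring (T : finType) (e : rel T) (m : nat) : Prop :=
  exists cv ce, @is_total_colouring T e m cv ce.

Definition is_pq_total_colouring (T : finType) (e : rel T) (p q : nat)
    (cv : T -> nat) (ce : T -> T -> nat) : Prop :=
  let ok a b := (q <= cdist a b <= p - q)%N in
  (forall x, cv x < p) /\
      (forall x y, e x y -> ce x y < p) /\
      (forall x y, e x y -> ce x y = ce y x) /\
      (forall x y, e x y -> ok (cv x) (cv y)) /\
      (forall x y, e x y -> ok (cv x) (ce x y)) /\
      (forall x y z, e x y -> e x z -> y != z -> ok (ce x y) (ce x z)).

Definition has_pq_total_colouring (T : finType) (e : rel T) (p q : nat) : Prop :=
  exists cv ce, @is_pq_total_colouring T e p q cv ce.

Definition circ_total_chromatic (R : realType) (T : finType) (e : rel T) : R :=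
  inf [set r : R | exists p q : nat,
         [/\ (1 <= q <= p)%N, has_pq_total_colouring e p q
           & r = (p%:R / q%:R)%R]].

(* Vertices: None = u (the block B_0);
   Some (i, inl j) = vertex a_j of block B_{i+1}   (j < k, the side of H_k
                     that keeps the half-edges),
   Some (i, inr l) = vertex b_l of block B_{i+1}   (l < k-1, the surviving
                     vertices of the other side of K_{k,k}).
   In each block, the half-edge f sits at a_0 and f' at a_1.
   Edges: all a_j b_l inside a block; e_0 = u -- a_1 of block 0 (f_0 + f'_1);
   e_i = a_0 of block i-1 -- a_1 of block i (f_i + f'_{i+1}), 1<=i<=n-1;
   e_n = a_0 of block n-1 -- u (f_n + f'_{n+1}).                            *)
Definition Gvert (k n : nat) : finType :=
  option ('I_n * ('I_k + 'I_k.-1))%type.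

Definition Gdir (k n : nat) (x y : Gvert k n) : bool :=
  match x, y with
  | None, Some (i, inl j) => (i == 0 :> nat) && (j == 1 :> nat)
  | Some (i, inl j), None => (i == n.-1 :> nat) && (j == 0 :> nat)
  | Some (i, inl _), Some (i', inr _) => i == i'
  | Some (i, inl j), Some (i', inl j') =>
      [&& (i' == i.+1 :> nat), (j == 0 :> nat) & (j' == 1 :> nat)]
  | _, _ => false
  end.

Definition Gadj (k n : nat) : rel (Gvert k n) :=
  fun x y => Gdir x y || Gdir y x.

From mathcomp Require Import all_boot all_order all_algebra.
From mathcomp Require Import classical_sets reals.
From mathcomp Require Import zify.
Import Order.TTheory GRing.Theory Num.Theory.

(* In a (k+1)-total colouring of G_{k,n}, each vertex b of a block has degree k, so
   b sees all k+1 colours.  Hence the a-vertices of a block get pairwise distinct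
   colours, and the two edges leaving a block must both carry the colour of some
   b-vertex -- the same one, since otherwise k+2 distinct colours would be needed.
   Following the chain B_1, ..., B_n, the edges e_0 and e_n at u get equal colours,
   which is absurd: G_{k,n} is type 2.
   A (p,q)-total colouring whose ratio p/q is close to m becomes an m-total colouring
   after a suitable common rotation of all colours followed by division by q; so
   the circular total chromatic number is bounded away from k+1.  The upper bound
   is an explicit ((k+1)n+1, n)-total colouring. *)

Lemma cdistC a b : cdist a b = cdist b a.
Proof. by rewrite /cdist maxnC minnC. Qed.

Lemma modn_lt_double x p : x < p + p -> x %% p = if x < p then x else x - p.
Proof.
case: ifP => [lt_xp _|/negbT]; first exact: modn_small.
rewrite -leqNgt => le_px lt_x2p.
by rewrite -{1}(subnK le_px) modnDr modn_small //; lia.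
Qed.

Lemma card_le_of_distinct {I : finType} {f : I -> nat} {a b N : nat} :
  injective f -> a != b -> (forall i, f i != a) -> (forall i, f i != b) ->
  a < N -> b < N -> (forall i, f i < N) -> #|I|.+2 <= N.
Proof.
move=> f_inj ab fa fb aN bN fN.
have -> : #|I|.+2 = size (a :: b :: map f (enum I)) by rewrite /= size_map cardE.
rewrite -[N](size_iota 0); apply: uniq_leq_size => [|x].
  rewrite /= !inE negb_or ab map_inj_uniq ?enum_uniq // andbT.
  apply/andP; split; apply/mapP => -[i _ /eqP];
    by rewrite eq_sym ?(negbTE (fa i)) ?(negbTE (fb i)).
rewrite !inE mem_iota add0n => /or3P [/eqP-> | /eqP-> | /mapP [i _ ->]] //; exact: fN.
Qed.

Definition vA {k n} (i : 'I_n) (j : 'I_k) : Gvert k n := Some (i, inl j).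
Definition vB {k n} (i : 'I_n) (l : 'I_k.-1) : Gvert k n := Some (i, inr l).

Lemma vA_neq_vB {k n} (i i' : 'I_n) (j : 'I_k) l : vA i j != vB i' l.
Proof. exact/eqP. Qed.

Lemma Gadj_sym {k n} (x y : Gvert k n) : Gadj x y = Gadj y x.
Proof. by rewrite /Gadj orbC. Qed.

Lemma Gadj_AB {k n} (i : 'I_n) (j : 'I_k) l : Gadj (vA i j) (vB i l).
Proof. by rewrite /Gadj /= eqxx. Qed.

Lemma Gadj_BA {k n} (i : 'I_n) (j : 'I_k) l : Gadj (vB i l) (vA i j).
Proof. by rewrite Gadj_sym Gadj_AB. Qed.

Section TypeTwoBlock.

Context {k n : nat} {cv : Gvert k n -> nat} {ce : Gvert k n -> Gvert k n -> nat}.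
Hypothesis k_gt1 : 1 < k.
Hypothesis col : is_total_colouring (@Gadj k n) k.+1 cv ce.
Context {i : 'I_n}.

Let cv_lt : forall x, cv x < k.+1 := col.1.
Let ce_lt : forall x y, Gadj x y -> ce x y < k.+1 := col.2.1.
Let ce_sym : forall x y, Gadj x y -> ce x y = ce y x := col.2.2.1.
Let cv_adj : forall x y, Gadj x y -> cv x <> cv y := col.2.2.2.1.
Let cv_ce : forall x y, Gadj x y -> cv x <> ce x y := col.2.2.2.2.1.
Let ce_adj : forall x y z, Gadj x y -> Gadj x z -> y != z -> ce x y <> ce x z :=
  col.2.2.2.2.2.

Let cA (j : 'I_k) := cv (vA i j).

Lemma ce_at_a_inj (j : 'I_k) : injective (fun l => ce (vA i j) (vB i l)).
Proof.
move=> l l' /= E; apply/eqP/negPn/negP => ll'.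
have vB_neq : vB i l != vB i l' :> Gvert k n by apply: contra ll' => /eqP[->].
exact: ce_adj _ _ _ (Gadj_AB i j l) (Gadj_AB i j l') vB_neq E.
Qed.

Lemma ce_at_b_inj (l : 'I_k.-1) : injective (fun j => ce (vA i j) (vB i l)).
Proof.
move=> j j' /= E; apply/eqP/negPn/negP => jj'.
have vA_neq : vA i j != vA i j' :> Gvert k n by apply: contra jj' => /eqP[->].
apply: (ce_adj _ _ _ (Gadj_BA i j l) (Gadj_BA i j' l) vA_neq).
by rewrite -(ce_sym _ _ (Gadj_AB i j l)) -(ce_sym _ _ (Gadj_AB i j' l)).
Qed.

Lemma colour_at_b (l : 'I_k.-1) c : c < k.+1 -> c != cv (vB i l) ->
  exists j, ce (vA i j) (vB i l) = c.
Proof.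
move=> c_lt c_b; have [j /eqP|missing] := pickP (fun j => ce (vA i j) (vB i l) == c).
  by exists j.
have not_c j : ce (vA i j) (vB i l) != c by rewrite missing.
have not_b j : ce (vA i j) (vB i l) != cv (vB i l).
  by rewrite (ce_sym _ _ (Gadj_AB i j l)) eq_sym; apply/eqP/cv_ce/Gadj_BA.
have := card_le_of_distinct (ce_at_b_inj l) c_b not_c not_b c_lt (cv_lt _)
  (fun j => ce_lt _ _ (Gadj_AB i j l)).
by rewrite card_ord ltnn.
Qed.

Lemma missing_colour_unique {c j1 j2} : c < k.+1 -> (forall l, c != cv (vB i l)) ->
  (forall l, ce (vA i j1) (vB i l) != c) -> (forall l, ce (vA i j2) (vB i l) != c) ->
  j1 = j2.
Proof.
move=> c_lt c_b miss1 miss2.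
have [g gP] := fin_all_exists (fun l => colour_at_b l c c_lt (c_b l)).
have g_inj : injective g.
  by move=> l l' gll'; apply: (ce_at_a_inj (g l)); rewrite /= gP gll' gP.
apply/eqP/negPn/negP => j12.
have not_j1 l : val (g l) != j1.
  by move: (miss1 l); apply: contraNneq => /val_inj <-; rewrite gP.
have not_j2 l : val (g l) != j2.
  by move: (miss2 l); apply: contraNneq => /val_inj <-; rewrite gP.
have := card_le_of_distinct (inj_comp val_inj g_inj) j12 not_j1 not_j2
  (ltn_ord j1) (ltn_ord j2) (fun l => ltn_ord (g l)).
rewrite card_ord; lia.
Qed.

Lemma a_colour_b_colour j l : cA j != cv (vB i l).
Proof. exact/eqP/cv_adj/Gadj_AB. Qed.

Lemma a_colour_missing j l : ce (vA i j) (vB i l) != cA j.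
Proof. by rewrite eq_sym; apply/eqP/cv_ce/Gadj_AB. Qed.

Lemma a_colour_inj : injective cA.
Proof.
move=> j j' E; apply: (missing_colour_unique (cv_lt (vA i j)) (a_colour_b_colour j)).
  exact: a_colour_missing.
by move=> l; rewrite [cv _]E; apply: a_colour_missing.
Qed.

Lemma outer_colour_is_b_colour {j x} : Gadj (vA i j) x -> (forall l, x != vB i l) ->
  exists l, ce (vA i j) x = cv (vB i l).
Proof.
move=> ax x_out; set h := ce (vA i j) x.
have [l /eqP|not_b] := pickP (fun l => h == cv (vB i l)); first by exists l.
have h_b l : h != cv (vB i l) by rewrite not_b.
have h_missing l : ce (vA i j) (vB i l) != h.
  by apply/eqP/ce_adj; rewrite ?Gadj_AB // eq_sym.
have h_a j' : cA j' != h.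
  have [<-|jj'] := eqVneq j j'; first exact/eqP/cv_ce.
  apply: contra jj' => /eqP h_j'; apply/eqP.
  apply: (missing_colour_unique (ce_lt _ _ ax) h_b h_missing) => l.
  by rewrite -/h -h_j'; apply: a_colour_missing.
have l0 : 'I_k.-1 by exists 0; lia.
have := card_le_of_distinct a_colour_inj (h_b l0) h_a (fun j' => a_colour_b_colour j' l0)
  (ce_lt _ _ ax) (cv_lt _) (fun j' => cv_lt _).
by rewrite card_ord ltnn.
Qed.

Lemma outer_edges_same_colour {j j' x x'} : Gadj (vA i j) x -> Gadj (vA i j') x' ->
  (forall l, x != vB i l) -> (forall l, x' != vB i l) ->
  ce (vA i j) x = ce (vA i j') x'.
Proof.
move=> ax ax' x_out x'_out.
have [l ->] := outer_colour_is_b_colour ax x_out.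
have [l' ->] := outer_colour_is_b_colour ax' x'_out.
apply/eqP/negPn/negP => ll'.
have := card_le_of_distinct a_colour_inj ll' (fun j => a_colour_b_colour j l)
  (fun j => a_colour_b_colour j l') (cv_lt _) (cv_lt _) (fun j => cv_lt _).
by rewrite card_ord ltnn.
Qed.

End TypeTwoBlock.

Lemma Gkn_not_total_colourable {k n} : 1 < k -> 0 < n ->
  ~ has_total_colouring (@Gadj k n) k.+1.
Proof.
move=> k_gt1; case: n => // n _ [cv [ce col]].
have [_ [_ [ce_sym [_ [_ ce_adj]]]]] := col.
pose a0 : 'I_k := Ordinal (ltnW k_gt1); pose a1 : 'I_k := Ordinal k_gt1.
pose block i : 'I_n.+1 := inord i.
pose prev i : Gvert k n.+1 := if i is i'.+1 then vA (block i') a0 else None.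
pose in_col i := ce (vA (block i) a1) (prev i).
have prev_not_b i j (l : 'I_k.-1) : prev i != vB j l by case: i => [|i]; apply/eqP.
have link i : i < n -> Gadj (vA (block i) a0) (vA (block i.+1) a1).
  by move=> lt_in; rewrite /Gadj /a0 /a1 /= !inordK ?eqxx ?orbT //; lia.
have enter i : i <= n -> Gadj (vA (block i) a1) (prev i).
  case: i => [|i] le_in; first by rewrite /Gadj /a0 /a1 /= inordK // eqxx orbT.
  by rewrite /prev /Gadj /a0 /a1 /= !inordK ?eqxx ?orbT //; lia.
have leave : Gadj (vA (block n) a0) None by rewrite /Gadj /a0 /a1 /= inordK ?eqxx.
have in_colS i : i < n -> in_col i.+1 = in_col i.
  move=> lt_in; rewrite /in_col /= -ce_sym ?link //.
  exact: (outer_edges_same_colour k_gt1 col (link i lt_in) (enter i (ltnW lt_in))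
    (vA_neq_vB _ _ _) (prev_not_b i _)).
have in_col0 i : i <= n -> in_col i = in_col 0.
  by elim: i => [|i IH] // lt_in; rewrite in_colS ?IH // ltnW.
have := outer_edges_same_colour k_gt1 col leave (enter n (leqnn n))
  (fun _ => erefl) (prev_not_b n _).
rewrite -/(in_col n) in_col0 // /in_col /= => ends_eq.
have leave_u : Gadj None (vA (block n) a0) by rewrite Gadj_sym.
have enter_u : Gadj None (vA (block 0) a1) by rewrite Gadj_sym (enter 0).
have a0_neq_a1 : vA (block n) a0 != vA (block 0) a1 by apply/eqP => -[_] /eqP.
apply: (ce_adj _ _ _ leave_u enter_u a0_neq_a1).
by rewrite (ce_sym _ _ leave_u) ends_eq (ce_sym _ _ enter_u).
Qed.

Definition rot_ord {p} (p_gt0 : 0 < p) (a : nat) (s : 'I_p) : 'I_p :=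
  Ordinal (ltn_pmod (a + s) p_gt0).

Lemma rot_ord_inj {p} (p_gt0 : 0 < p) a : injective (rot_ord p_gt0 a).
Proof.
move=> s s' /(congr1 val) /= /eqP; rewrite eqn_modDl !modn_small // => /eqP.
exact: val_inj.
Qed.

Lemma sum_ord_geq p c : \sum_(t < p) (c <= t) = p - c.
Proof. by elim: p => [|p IH]; rewrite ?big_ord0 // big_ord_recr /= IH; lia. Qed.

Lemma sum_rot_geq p a c : 0 < p -> \sum_(s < p) (c <= (a + s) %% p) = p - c.
Proof.
move=> p_gt0; rewrite -sum_ord_geq [RHS](reindex_inj (rot_ord_inj p_gt0 a)).
by apply: eq_bigr.
Qed.

Lemma exists_rotation_below (L : seq nat) p c : size L * (p - c) < p ->
  exists s : 'I_p, all (fun a => (a + s) %% p < c) L.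
Proof.
move=> small; have p_gt0 : 0 < p by lia.
have [s|none] := pickP (fun s : 'I_p => all (fun a => (a + s) %% p < c) L).
  by exists s.
move: small; rewrite ltnNge => /negP[].
have -> : size L * (p - c) = \sum_(s < p) \sum_(a <- L) (c <= (a + s) %% p).
  rewrite exchange_big /= (eq_bigr (fun _ => p - c)) => [|a _]; last exact: sum_rot_geq.
  by rewrite big_const_seq count_predT iter_addn_0 mulnC.
rewrite -[X in X <= _]card_ord -sum1_card; apply: leq_sum => s _.
apply: contraFT (none s); rewrite -eqn0Ngt sum_nat_seq_eq0.
by apply: sub_all => a; rewrite eqb0 ltnNge.
Qed.

Lemma cdist_rot p q a b s : a < p -> b < p -> s < p -> q <= cdist a b <= p - q ->
  q <= cdist ((a + s) %% p) ((b + s) %% p).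
Proof.
move=> lt_ap lt_bp lt_sp; rewrite !modn_lt_double /cdist; try lia.
by case: ifP; case: ifP; lia.
Qed.

Lemma divn_neq_of_cdist q a b : 0 < q -> q <= cdist a b -> a %/ q != b %/ q.
Proof.
move=> q_gt0 le_q; apply/eqP => eq_div.
have := divn_eq a q; have := divn_eq b q.
have := ltn_pmod a q_gt0; have := ltn_pmod b q_gt0.
move: le_q; rewrite /cdist eq_div; lia.
Qed.

(* Rotate all colours by a common s and divide by q: circular distance >= q becomes
   distinctness, and a counting argument finds an s sending no colour into [mq, p). *)
Lemma total_colouring_of_pq_colouring {T : finType} {e : rel T} {m p q} :
  0 < q -> has_pq_total_colouring e p q ->
  (#|T| + #|T| * #|T|) * (p - m * q) < p -> has_total_colouring e m.
Proof.
move=> q_gt0 [cv [ce [cv_lt [ce_lt [ce_sym [cv_adj [cv_ce ce_adj]]]]]]] small.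
pose L := [seq cv x | x <- enum T] ++ [seq ce xy.1 xy.2 | xy <- enum {: T * T}].
have size_L : size L = #|T| + #|T| * #|T|.
  by rewrite size_cat !size_map -!enumT -!cardE card_prod.
have [s /allP L_low] : exists s : 'I_p, all (fun a => (a + s) %% p < m * q) L.
  by apply: exists_rotation_below; rewrite size_L.
pose round c := ((c + s) %% p) %/ q.
have round_lt c : c \in L -> round c < m by move/L_low; rewrite ltn_divLR.
have round_neq a b : a < p -> b < p -> q <= cdist a b <= p - q -> round a <> round b.
  move=> lt_ap lt_bp ab; apply/eqP/divn_neq_of_cdist => //.
  exact: cdist_rot lt_ap lt_bp (ltn_ord s) ab.
exists (fun x => round (cv x)), (fun x y => round (ce x y)).
split; [|split; [|split; [|split; [|split]]]].
- by move=> x; apply: round_lt; rewrite mem_cat map_f ?mem_enum.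
- move=> x y _; apply: round_lt; rewrite mem_cat; apply/orP; right.
  by apply/mapP; exists (x, y); rewrite ?mem_enum.
- by move=> x y xy; rewrite ce_sym.
- by move=> x y xy; apply: round_neq (cv_adj _ _ xy).
- by move=> x y xy; apply: round_neq (cv_ce _ _ xy) => //; apply: ce_lt.
- by move=> x y z xy xz yz; apply: round_neq (ce_adj _ _ _ xy xz yz); apply: ce_lt.
Qed.

Lemma ratio_ge_of_gap (R : realFieldType) m N p q : 0 < q ->
  0 < p <= N * (p - m * q) -> (m%:R + m%:R / N%:R <= p%:R / q%:R :> R)%R.
Proof.
move=> q_gt0 /andP[p_gt0 gap]; have N_gt0 : 0 < N by case: N gap; lia.
have le_nat : (m * N + m) * q <= p * N by have : m * q < p; nia.
have -> : (m%:R + m%:R / N%:R = (m * N + m)%:R / N%:R :> R)%R.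
  by rewrite natrD natrM mulrDl mulfK // pnatr_eq0 -lt0n.
by rewrite ler_pdivlMr ?ltr0n // mulrAC ler_pdivrMr ?ltr0n // -!natrM ler_nat.
Qed.


Section CircularTotalChromatic.
Local Open Scope ring_scope.

Lemma circ_total_chromatic_le {R : realType} {T : finType} {e : rel T} {p q} :
  (1 <= q <= p)%N -> has_pq_total_colouring e p q ->
  circ_total_chromatic R e <= p%:R / q%:R.
Proof.
move=> qp pq; apply: ge_inf; last by exists p, q.
by exists 0 => _ [p' [q' [_ _ ->]]]; rewrite divr_ge0.
Qed.

Lemma circ_total_chromatic_gt {R : realType} {T : finType} {e : rel T} {m p q} :
  (0 < m)%N -> (1 <= q <= p)%N -> has_pq_total_colouring e p q ->
  ~ has_total_colouring e m -> m%:R < circ_total_chromatic R e.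
Proof.
move=> m_gt0 qp pq no_m; pose N := (#|T| + #|T| * #|T|)%N.
have gap p' q' : (1 <= q' <= p')%N -> has_pq_total_colouring e p' q' ->
    (0 < p' <= N * (p' - m * q'))%N.
  move=> /andP[q_gt0 le_qp] pq'; rewrite (leq_trans q_gt0 le_qp) leqNgt /=.
  apply/negP => small; apply: no_m.
  exact: total_colouring_of_pq_colouring q_gt0 pq' small.
have N_gt0 : (0 < N)%N.
  have /andP[p_gt0 /(leq_trans p_gt0)] := gap _ _ qp pq.
  by rewrite muln_gt0 => /andP[].
apply: (@lt_le_trans _ _ (m%:R + m%:R / N%:R)); first by rewrite ltrDl divr_gt0 ?ltr0n.
apply: lb_le_inf; first by exists (p%:R / q%:R), p, q.
move=> _ [p' [q' [qp' pq' ->]]]; apply: ratio_ge_of_gap (gap _ _ qp' pq').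
by case/andP: qp'.
Qed.

End CircularTotalChromatic.

Definition orient {k n} (d : Gvert k n -> Gvert k n -> nat) (x y : Gvert k n) : nat :=
  if Gdir x y then d x y else d y x.

Lemma Gdir_asym {k n} {x y : Gvert k n} : Gdir x y -> ~~ Gdir y x.
Proof.
case: x => [[i [j|l]]|]; case: y => [[i' [j'|l']]|] //=; rewrite -?val_eqE /=; lia.
Qed.

Lemma orient_sym {k n} d (x y : Gvert k n) : Gadj x y -> orient d x y = orient d y x.
Proof.
by rewrite /orient; case/orP=> dir; rewrite dir (negbTE (Gdir_asym dir)).
Qed.

Lemma Gvert_neq_AA k n (i i' : 'I_n) (j j' : 'I_k) :
  (Some (i, inl j) != Some (i', inl j') :> Gvert k n) =
  (i != i' :> nat) || (j != j' :> nat).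
Proof. by rewrite -[_ == _]/((i, inl j) == (i', inl j')) xpair_eqE negb_and. Qed.

Lemma Gvert_neq_BB k n (i i' : 'I_n) (l l' : 'I_k.-1) :
  (Some (i, inr l) != Some (i', inr l') :> Gvert k n) =
  (i != i' :> nat) || (l != l' :> nat).
Proof. by rewrite -[_ == _]/((i, inr l) == (i', inr l')) xpair_eqE negb_and. Qed.

Ltac ord_bounds := repeat match goal with x : _ |- _ =>
  lazymatch goal with
  | _ : is_true (nat_of_ord x < _) |- _ => fail
  | _ => have := ltn_ord x; move=> ?
  end end.

Ltac destruct_bool_hyps := repeat match goal with
  | H : is_true (_ || _) |- _ => case/orP: H => H
  | H : is_true (_ && _) |- _ => let H' := fresh in case/andP: H => H' H
  | H : is_true (_ == _) |- _ => move/eqP: H => H; try subst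
  end.

Ltac unfold_adjacency := repeat match goal with
  | H : is_true (Gadj _ _) |- _ => rewrite /Gadj /= in H
  | H : is_true (Some (_, inl _) != Some (_, inl _)) |- _ => rewrite Gvert_neq_AA in H
  | H : is_true (Some (_, inr _) != Some (_, inr _)) |- _ => rewrite Gvert_neq_BB in H
  end; destruct_bool_hyps; ord_bounds.

Ltac case_ifs := repeat (let H := fresh in case: ifP => H).

(* For k >= 3 a colour is written c * n + t with a "major" colour c <= k + 1 and a
   block offset t <= n.  Within a block the major colours form a (k+1)-total
   colouring in which both outer edges get colour k; the offsets let the edge e_i
   carry k * n + i, climbing from k * n at e_0 to (k+1) * n at e_n.  Colours are
   spelt c * n + t even when t = 0 or c = 1, so that [grid_cdist] applies. *)
Definition grid_sep k n c t c' t' : Prop :=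
  (c' < c /\ t' <= t \/ c' + 2 <= c) /\
  (c <= c' + k - 1 \/ c <= c' + k /\ t <= t' + 1 \/ c <= c' + k + 1 /\ t + n <= t' + 1).

Lemma grid_cdist k n c t c' t' : 0 < n -> t <= n -> t' <= n ->
  grid_sep k n c t c' t' \/ grid_sep k n c' t' c t ->
  n <= cdist (c * n + t) (c' * n + t') <= k.+1 * n + 1 - n.
Proof. rewrite /grid_sep /cdist => *; nia. Qed.

Definition a_major k (j : nat) := if j == 0 then k.-1 else j.-1.
Definition ab_major k (j l : nat) := if j + l < k then j + l else j + l - k.

Definition cv_grid {k n} (x : Gvert k n) : nat :=
  match x with
  | None => 1 * n + 0
  | Some (i, inl j) => a_major k j * n + i
  | Some (i, inr _) => k * n + i
  end.

Definition ce_grid_dir {k n} (x y : Gvert k n) : nat :=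
  match x, y with
  | None, Some (_, inl _) => k * n + 0
  | Some (_, inl _), None => k.+1 * n + 0
  | Some (i, inl j), Some (_, inr l) => ab_major k j l * n + i
  | Some (i, inl _), Some (_, inl _) => k * n + i.+1
  | _, _ => 0
  end.

Definition ce_grid {k n} := orient (@ce_grid_dir k n).

Ltac grid_sep_check := first
  [ exfalso; lia
  | apply: grid_cdist => //; rewrite /grid_sep ?/a_major ?/ab_major; case_ifs; lia ].

Section GridColouring.

Variables (k n : nat).
Hypotheses (k_gt2 : 2 < k) (n_gt0 : 0 < n).

Lemma cv_grid_adj (x y : Gvert k n) : Gadj x y ->
  n <= cdist (cv_grid x) (cv_grid y) <= k.+1 * n + 1 - n.
Proof.
by case: x y => [[i [j|l]]|] [[i' [j'|l']]|] xy; unfold_adjacency; grid_sep_check.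
Qed.

Lemma cv_ce_grid_adj (x y : Gvert k n) : Gadj x y ->
  n <= cdist (cv_grid x) (ce_grid x y) <= k.+1 * n + 1 - n.
Proof.
case: x y => [[i [j|l]]|] [[i' [j'|l']]|] xy; unfold_adjacency;
  rewrite /ce_grid /orient /= -?val_eqE /=; case_ifs; grid_sep_check.
Qed.

Lemma ce_grid_adj (x y z : Gvert k n) : Gadj x y -> Gadj x z -> y != z ->
  n <= cdist (ce_grid x y) (ce_grid x z) <= k.+1 * n + 1 - n.
Proof.
case: x y z => [[i [j|l]]|] [[i' [j'|l']]|] [[i2 [j2|l2]]|] xy xz yz; unfold_adjacency;
  rewrite /ce_grid /orient /= -?val_eqE /=; case_ifs; grid_sep_check.
Qed.

Lemma grid_lt c t : c <= k.+1 -> t <= n -> (c <= k \/ t = 0) -> c * n + t < k.+1 * n + 1.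
Proof. nia. Qed.

Ltac grid_lt_check := first
  [ exfalso; lia
  | apply: grid_lt => //; rewrite ?/a_major ?/ab_major; case_ifs; lia ].

Lemma cv_grid_lt (x : Gvert k n) : cv_grid x < k.+1 * n + 1.
Proof. by case: x => [[i [j|l]]|]; ord_bounds; grid_lt_check. Qed.

Lemma ce_grid_lt (x y : Gvert k n) : Gadj x y -> ce_grid x y < k.+1 * n + 1.
Proof.
case: x y => [[i [j|l]]|] [[i' [j'|l']]|] xy; unfold_adjacency;
  rewrite /ce_grid /orient /= -?val_eqE /=; case_ifs; grid_lt_check.
Qed.

Lemma grid_pq_colouring :
  is_pq_total_colouring (@Gadj k n) (k.+1 * n + 1) n cv_grid ce_grid.
Proof.
split; first exact: cv_grid_lt.
split; first exact: ce_grid_lt.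
split; first by move=> x y; apply: orient_sym.
split; [exact: cv_grid_adj | split; [exact: cv_ce_grid_adj | exact: ce_grid_adj]].
Qed.

End GridColouring.

Lemma cdist_add_mod p q x d : x < p -> q <= d <= p - q ->
  q <= cdist x ((x + d) %% p) <= p - q.
Proof. by move=> lt_xp le_d; rewrite modn_lt_double /cdist; [case: ifP|]; lia. Qed.

(* G_{2,n} is a cycle of length 3n+1.  Number its vertices and edges 0, ..., 6n+1 in
   cyclic order (u = 0, e_0 = 1, ..., e_n = 6n+1) and give position s the colour
   s(2n+1) mod (3n+1): one step along the cycle adds 2n+1, two steps add n+1. *)
Definition cycle_colour n (s : nat) := s * (2 * n + 1) %% (3 * n + 1).

Lemma cycle_colour_periodic n s : cycle_colour n (s + (6 * n + 2)) = cycle_colour n s.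
Proof.
rewrite /cycle_colour.
have -> : (s + (6 * n + 2)) * (2 * n + 1) = (4 * n + 2) * (3 * n + 1) + s * (2 * n + 1).
  by nia.
by rewrite modnMDl.
Qed.

Lemma cycle_colour_step n s d : 0 < n -> (d == 1) || (d == 2) ->
  n <= cdist (cycle_colour n s) (cycle_colour n (s + d)) <= 3 * n + 1 - n.
Proof.
move=> n_gt0 d12; rewrite /cycle_colour mulnDl -modnDm.
have -> : d * (2 * n + 1) %% (3 * n + 1) = if d == 1 then 2 * n + 1 else n + 1.
  case/orP: d12 => /eqP->; first by rewrite mul1n modn_small //; lia.
  have -> : 2 * (2 * n + 1) = (n + 1) + (3 * n + 1) by lia.
  by rewrite modnDr modn_small //; lia.
by apply: cdist_add_mod; [apply: ltn_pmod | case: ifP]; lia.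
Qed.

Definition cycle_next n (s t : nat) : Prop :=
  s + 1 = t \/ s + 2 = t \/ s + 1 = t + (6 * n + 2) \/ s + 2 = t + (6 * n + 2).

Lemma cycle_colour_near n s t : 0 < n -> cycle_next n s t \/ cycle_next n t s ->
  n <= cdist (cycle_colour n s) (cycle_colour n t) <= 3 * n + 1 - n.
Proof.
have step s' t' : 0 < n -> cycle_next n s' t' ->
    n <= cdist (cycle_colour n s') (cycle_colour n t') <= 3 * n + 1 - n.
  move=> n_gt0 [|[|[|]]] E;
    [rewrite -E | rewrite -E | rewrite -(cycle_colour_periodic n t') -E ..];
    exact: cycle_colour_step.
by move=> n_gt0 [st|ts]; [|rewrite cdistC]; apply: step.
Qed.

Definition cycle_pos {n} (x : Gvert 2 n) : nat :=
  match x with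
  | None => 0
  | Some (i, inl j) => 6 + 6 * i - 4 * j
  | Some (i, inr _) => 4 + 6 * i
  end.

Definition cycle_pos_dir {n} (x y : Gvert 2 n) : nat :=
  match x, y with
  | None, Some (_, inl _) => 1
  | Some (_, inl _), None => 6 * n + 1
  | Some (i, inl j), Some (_, inr _) => 5 + 6 * i - 2 * j
  | Some (i, inl _), Some (_, inl _) => 7 + 6 * i
  | _, _ => 0
  end.

Definition cv_cycle {n} (x : Gvert 2 n) := cycle_colour n (cycle_pos x).
Definition ce_cycle {n} (x y : Gvert 2 n) := cycle_colour n (orient cycle_pos_dir x y).

Ltac cycle_near_check := first
  [ exfalso; lia
  | apply: cycle_colour_near => //; rewrite /cycle_next /cycle_pos /cycle_pos_dir /=;
    case_ifs; lia ].

Section CycleColouring.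

Variables (n : nat).
Hypothesis n_gt0 : 0 < n.

Lemma cv_cycle_adj (x y : Gvert 2 n) : Gadj x y ->
  n <= cdist (cv_cycle x) (cv_cycle y) <= 3 * n + 1 - n.
Proof.
by case: x y => [[i [j|l]]|] [[i' [j'|l']]|] xy; unfold_adjacency; cycle_near_check.
Qed.

Lemma cv_ce_cycle_adj (x y : Gvert 2 n) : Gadj x y ->
  n <= cdist (cv_cycle x) (ce_cycle x y) <= 3 * n + 1 - n.
Proof.
case: x y => [[i [j|l]]|] [[i' [j'|l']]|] xy; unfold_adjacency;
  rewrite /ce_cycle /orient /= -?val_eqE /=; case_ifs; cycle_near_check.
Qed.

Lemma ce_cycle_adj (x y z : Gvert 2 n) : Gadj x y -> Gadj x z -> y != z ->
  n <= cdist (ce_cycle x y) (ce_cycle x z) <= 3 * n + 1 - n.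
Proof.
case: x y z => [[i [j|l]]|] [[i' [j'|l']]|] [[i2 [j2|l2]]|] xy xz yz; unfold_adjacency;
  rewrite /ce_cycle /orient /= -?val_eqE /=; case_ifs; cycle_near_check.
Qed.

Lemma cycle_pq_colouring :
  is_pq_total_colouring (@Gadj 2 n) (3 * n + 1) n cv_cycle ce_cycle.
Proof.
have colour_lt s : cycle_colour n s < 3 * n + 1 by rewrite ltn_pmod // addn1.
split; first by move=> x; apply: colour_lt.
split; first by move=> x y _; apply: colour_lt.
split; first by move=> x y xy; rewrite /ce_cycle orient_sym.
split; [exact: cv_cycle_adj | split; [exact: cv_ce_cycle_adj | exact: ce_cycle_adj]].
Qed.

End CycleColouring.

Lemma Gkn_pq_colouring {k n} : 1 < k -> 0 < n ->
  has_pq_total_colouring (@Gadj k n) (k.+1 * n + 1) n.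
Proof.
case: k => [|[|[|k]]] // _ n_gt0.
  by exists cv_cycle, ce_cycle; apply: cycle_pq_colouring.
by exists cv_grid, ce_grid; apply: grid_pq_colouring.
Qed.

Theorem theorem4 (R : realType) (k n : nat) (hk : (2 <= k)%N) (hn : (1 <= n)%N) :
  ~ has_total_colouring (@Gadj k n) k.+1 /\
  ((k.+1)%:R < circ_total_chromatic R (@Gadj k n) /\
   circ_total_chromatic R (@Gadj k n) <= (k.+1)%:R + 1 / n%:R)%R.
Proof.
have not_total := Gkn_not_total_colourable hk hn.
have pq := Gkn_pq_colouring hk hn.
have qp : (1 <= n <= k.+1 * n + 1)%N by rewrite hn /=; nia.
split=> //; split; first exact: circ_total_chromatic_gt qp pq not_total.
apply: le_trans (circ_total_chromatic_le qp pq) _.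
by rewrite natrD natrM mulrDl mulfK // pnatr_eq0 -lt0n.
Qed.
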